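(* Let $t$ be a positive integer and $n=2t+1$. Then the locating chromatic number of the friendship graph $Fr_n$ is $1+\min\{k\in\mathbb{N}: t\le\binom{k}{2}\}$.
   Context: All graphs are finite and simple. The friendship graph $Fr_n$, $n=2t+1$, is the join of $K_1$ with $t$ disjoint copies of $K_2$, i.e. one central vertex adjacent to all vertices of $t$ disjoint edges. A proper $k$-coloring of $G$ is a map from $V(G)$ onto $[k]=\{1,\dots,k\}$ with adjacent vertices receiving different colors. For a connected graph $G$ with proper $k$-coloring $f$ and color classes $V_i=f^{-1}(i)$, the color code of $v$ is $(d(v,V_1),\dots,d(v,V_k))$, where $d(v,S)=\min_{x\in S}d(v,x)$; $f$ is a locating coloring if distinct vertices have distinct color codes, and the locating chromatic number $\chi_L(G)$ is the minimum number of colors in a locating coloring. *)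

From mathcomp Require Import all_boot.
Set Implicit Arguments. Unset Strict Implicit. Unset Printing Implicit Defensive.

Section Graphs.
Variable T : finType.
Variable e : rel T.

Definition walk_len (k : nat) (u v : T) : bool :=
  [exists p : k.-tuple T, path e u p && (last u p == v)].

(* graph distance: least k with a walk of length k (for connected graphs,
   this is always < #|T|; otherwise the default #|T|) *)
Definition gdist (u v : T) : nat :=
  find (fun k => walk_len k u v) (iota 0 #|T|).

(* distance from a vertex to a set (classes are nonempty for onto colorings) *)
Definition setdist (v : T) (S : {set T}) : nat :=
  \big[minn/#|T|]_(x in S) gdist v x.

Definition color_class (k : nat) (f : {ffun T -> 'I_k}) (i : 'I_k) : {set T} :=
  [set x | f x == i].

Definition proper_coloring (k : nat) (f : {ffun T -> 'I_k}) : bool :=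
  [forall x, forall y, e x y ==> (f x != f y)] &&
  [forall i : 'I_k, exists x, f x == i].

Definition color_code (k : nat) (f : {ffun T -> 'I_k}) (v : T) : {ffun 'I_k -> nat} :=
  [ffun i => setdist v (color_class f i)].

Definition locating_coloring (k : nat) (f : {ffun T -> 'I_k}) : bool :=
  proper_coloring f &&
  [forall u, forall v, (color_code f u == color_code f v) ==> (u == v)].

Definition has_locating_coloring (k : nat) : bool :=
  [exists f : {ffun T -> 'I_k}, locating_coloring f].

(* locating chromatic number: least k admitting a locating k-coloring
   (for connected graphs such k <= #|T| always exists) *)
Definition locating_chromatic_number : nat :=
  find has_locating_coloring (iota 0 #|T|.+1).

End Graphs.

(* Friendship graph Fr_{2t+1}: vertex 0 is the centre, vertices 2i+1, 2i+2
   (i < t) form the i-th triangle edge. *)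
Definition friendship_adj (t : nat) : rel 'I_(2 * t + 1) :=
  fun x y => (x != y) &&
    [|| nat_of_ord x == 0, nat_of_ord y == 0 | (x.-1)./2 == (y.-1)./2].
Arguments friendship_adj t : clear implicits.

From mathcomp Require Import all_boot zify.
Set Implicit Arguments. Unset Strict Implicit. Unset Printing Implicit Defensive.

(* Fr_n has diameter two, so in a proper colouring the colour code of a vertex
   records exactly its own colour and the set of colours of its neighbours.
   In a locating colouring the centre therefore has a colour of its own, and
   the two leaves of a triangle see only the centre's colour and each other's;
   hence distinct triangles carry distinct 2-subsets of the remaining k - 1
   colours, and t <= C(k - 1, 2).  Conversely, colour the centre 0 and the
   leaves of the s-th triangle i + 1 and j + 1, where (i, j) is the s-th pair
   i < j in colexicographic order; minimality of m makes every colour occur. *)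

Lemma find_iota_least (a : pred nat) N n :
  n < N -> a n -> (forall k, a k -> n <= k) -> find a (iota 0 N) = n.
Proof.
move=> ltnN an least.
have has_a : has a (iota 0 N) by apply/hasP; exists n; rewrite ?mem_iota.
have lt_find : find a (iota 0 N) < N by rewrite -[N in _ < N](size_iota 0) -has_find.
apply/eqP; rewrite eqn_leq; apply/andP; split.
  by rewrite leqNgt; apply/negP => /(before_find 0); rewrite nth_iota // add0n an.
by apply: least; have := nth_find 0 has_a; rewrite nth_iota // add0n.
Qed.

Lemma bigmin_attained (I : finType) (P : pred I) (g : I -> nat) N x0 :
  P x0 -> g x0 <= N -> (forall x, P x -> g x0 <= g x) ->
  \big[minn/N]_(x | P x) g x = g x0.
Proof.
move=> Px0 gx0N least; apply/eqP; rewrite eqn_leq; apply/andP; split.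
  have : x0 \in index_enum I by rewrite mem_index_enum.
  elim: (index_enum I) => // y r IH; rewrite inE big_cons => /predU1P [<-|/IH le].
    by rewrite Px0 geq_minl.
  by case: (P y) => //; rewrite geq_min le orbT.
by apply: (big_ind (fun y => g x0 <= y)) => // y z; rewrite leq_min => -> ->.
Qed.

Section Graphs.
Variables (T : finType) (e : rel T).

Lemma walk_len0 u v : walk_len e 0 u v = (u == v).
Proof.
apply/existsP/idP => [[p]|/eqP <-]; first by rewrite tuple0 /=.
by exists [tuple]; rewrite /= eqxx.
Qed.

Lemma walk_len1 u v : walk_len e 1 u v = e u v.
Proof.
apply/existsP/idP => [[p]|euv]; last by exists [tuple v]; rewrite /= euv eqxx.
by case/tupleP: p => x p; rewrite tuple0 /= andbT => /andP [euv /eqP <-].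
Qed.

Lemma walk_len2 u w v : e u w -> e w v -> walk_len e 2 u v.
Proof.
by move=> euw ewv; apply/existsP; exists [tuple w; v]; rewrite /= euw ewv eqxx.
Qed.

Definition nbr_colors k (f : {ffun T -> 'I_k}) v : {set 'I_k} := f @: [set x | e v x].

Lemma proper_coloring_adj k (f : {ffun T -> 'I_k}) x y :
  proper_coloring e f -> e x y -> f x != f y.
Proof. by case/andP => /forallP/(_ x)/forallP/(_ y)/implyP. Qed.

Lemma color_class_neq0 k (f : {ffun T -> 'I_k}) i :
  proper_coloring e f -> color_class f i != set0.
Proof.
by case/andP => _ /forallP/(_ i)/existsP [x fx]; apply/set0Pn; exists x; rewrite inE.
Qed.

Section DiameterTwo.
Hypothesis walk2 : forall u v, walk_len e 2 u v.
Hypothesis card_gt2 : 2 < #|T|.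

Lemma gdist_diam2 u v : gdist e u v = if u == v then 0 else if e u v then 1 else 2.
Proof.
rewrite /gdist; case: eqP => [->|neq_uv].
  by apply: find_iota_least; rewrite ?walk_len0 //; lia.
have walk_pos k : walk_len e k u v -> 0 < k.
  by case: k => //; rewrite walk_len0 => /eqP.
case: ifP => euv.
  by apply: find_iota_least; [lia | rewrite walk_len1 | exact: walk_pos].
apply: find_iota_least => // -[|[|k]] //; first by move/walk_pos.
by rewrite walk_len1 euv.
Qed.

Lemma setdist_diam2 v (S : {set T}) : S != set0 ->
  setdist e v S = if v \in S then 0 else if [exists x in S, e v x] then 1 else 2.
Proof.
move=> /set0Pn [x0 Sx0]; rewrite /setdist.
case: ifPn => [Sv|notSv].
  by rewrite (@bigmin_attained _ _ _ _ v) // ?gdist_diam2 ?eqxx //; lia.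
have neq_vS x : x \in S -> v != x by move=> Sx; apply: contraNneq notSv => ->.
have gdist_ge1 x : x \in S -> 0 < gdist e v x.
  by move=> Sx; rewrite gdist_diam2 (negPf (neq_vS x Sx)); case: ifP.
case: ifP => [/existsP [x /andP [Sx evx]]|no_adj].
  have gdist1 : gdist e v x = 1 by rewrite gdist_diam2 (negPf (neq_vS x Sx)) evx.
  by rewrite (bigmin_attained (x0 := x)) ?gdist1 //; lia.
have gdist2 x : x \in S -> gdist e v x = 2.
  move=> Sx; rewrite gdist_diam2 (negPf (neq_vS x Sx)).
  by case: ifP => // evx; move/existsP: no_adj; case; exists x; rewrite Sx evx.
by rewrite (bigmin_attained (x0 := x0)) ?gdist2 // => [|x /gdist2 ->]; lia.
Qed.

Lemma color_codeE k (f : {ffun T -> 'I_k}) v i : proper_coloring e f ->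
  color_code e f v i = if f v == i then 0 else if i \in nbr_colors f v then 1 else 2.
Proof.
move=> fP; rewrite /color_code ffunE setdist_diam2 ?color_class_neq0 // inE.
suff -> : [exists x in color_class f i, e v x] = (i \in nbr_colors f v) by [].
apply/existsP/imsetP => [[x /andP [/[!inE] /eqP <- evx]]|[x /[!inE] evx ->]].
  by exists x; rewrite ?inE.
by exists x; rewrite inE eqxx.
Qed.

Lemma color_code_eqP k (f : {ffun T -> 'I_k}) u v : proper_coloring e f ->
  reflect (f u = f v /\ nbr_colors f u = nbr_colors f v)
          (color_code e f u == color_code e f v).
Proof.
move=> fP.
have nbr_colorsE w : nbr_colors f w = [set i | color_code e f w i == 1].
  apply/setP => i; rewrite inE color_codeE //.
  case: (f w =P i) => [<-|_]; last by case: (i \in _).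
  by apply/imsetP => -[x /[!inE] /(proper_coloring_adj fP) /eqP].
apply: (iffP eqP) => [codes|[fuv nuv]].
  split; last by rewrite !nbr_colorsE codes.
  have : color_code e f u (f u) = 0 by rewrite color_codeE // eqxx.
  by rewrite codes color_codeE //; case: eqP => //; case: ifP.
by apply/ffunP => i; rewrite !color_codeE // fuv nuv.
Qed.

Lemma locating_coloring_inj k (f : {ffun T -> 'I_k}) u v : locating_coloring e f ->
  f u = f v -> nbr_colors f u = nbr_colors f v -> u = v.
Proof.
case/andP => fP /forallP/(_ u)/forallP/(_ v)/implyP loc fuv nuv.
by apply/eqP/loc/(color_code_eqP _ _ fP).
Qed.

End DiameterTwo.
End Graphs.

Lemma set2_eq_cases (K : finType) (x y x' y' : K) : x != y ->
  [set x; y] = [set x'; y'] -> (x = x' /\ y = y') \/ (x = y' /\ y = x').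
Proof.
move=> neq_xy E; have := set21 x y; have := set22 x y; rewrite E.
by case/set2P => ey; case/set2P => ex; move: neq_xy; rewrite ex ey ?eqxx; [|right|left|].
Qed.

(* [unrank_pair s] is the s-th pair i < j in the order (0,1), (0,2), (1,2),
   (0,3), ...; [rank_pair] inverts it. *)
Definition rank_pair (p : nat * nat) : nat := 'C(p.2, 2) + p.1.

Fixpoint unrank_pair (s : nat) : nat * nat :=
  if s is s'.+1 then
    let: (i, j) := unrank_pair s' in if i.+1 < j then (i.+1, j) else (0, j.+1)
  else (0, 1).

Lemma unrank_pair_lt s : (unrank_pair s).1 < (unrank_pair s).2.
Proof. by elim: s => //= s; case: (unrank_pair s) => i j /= ltij; case: ifP. Qed.

Lemma unrank_pairK : cancel unrank_pair rank_pair.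
Proof.
rewrite /rank_pair; elim=> //= s; move: (unrank_pair_lt s).
case: (unrank_pair s) => i j /= ltij IH; case: ifP => /= lt_ij; first lia.
by rewrite binS bin1; lia.
Qed.

Lemma unrank_pair_inj : injective unrank_pair.
Proof. exact: can_inj unrank_pairK. Qed.

Lemma rank_pair_inj i j i' j' : i < j -> i' < j' ->
  rank_pair (i, j) = rank_pair (i', j') -> (i, j) = (i', j').
Proof.
rewrite /rank_pair /= => ltij lti'j'; case: (ltngtP j j') => [lt_jj'|lt_j'j|<-] E.
- by exfalso; have := leq_bin2l 2 lt_jj'; rewrite binS bin1; lia.
- by exfalso; have := leq_bin2l 2 lt_j'j; rewrite binS bin1; lia.
- by congr pair; lia.
Qed.

Lemma rank_pairK i j : i < j -> unrank_pair (rank_pair (i, j)) = (i, j).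
Proof.
move=> ltij; have := unrank_pair_lt (rank_pair (i, j)).
have := unrank_pairK (rank_pair (i, j)).
by case: (unrank_pair _) => i' j' /= /esym /rank_pair_inj E /E ->.
Qed.

Lemma unrank_pair_bound m s : s < 'C(m, 2) -> (unrank_pair s).2 < m.
Proof.
move=> ltsm; rewrite ltnNge; apply/negP => /(leq_bin2l 2).
by have := unrank_pairK s; rewrite /rank_pair; lia.
Qed.

Section Friendship.
Variable t : nat.
Local Notation V := 'I_(2 * t + 1).
Local Notation fr := (friendship_adj t).

Lemma fr_centre_subproof : 0 < 2 * t + 1. Proof. by rewrite addn1. Qed.
Definition fr_centre : V := Ordinal fr_centre_subproof.

Lemma fr_leaf_subproof (s : 'I_t) (b : bool) : (2 * s + b).+1 < 2 * t + 1.
Proof. by have := ltn_ord s; case: b; lia. Qed.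
Definition fr_leaf (s : 'I_t) (b : bool) : V := Ordinal (fr_leaf_subproof s b).

Variant fr_vertex_spec : V -> Type :=
  | FrCentre : fr_vertex_spec fr_centre
  | FrLeaf s b : fr_vertex_spec (fr_leaf s b).

Lemma fr_vertexP v : fr_vertex_spec v.
Proof.
have [v0|v_pos] := posnP v.
  have -> : v = fr_centre by apply: val_inj => /=; rewrite v0.
  constructor.
have lt_s : (v.-1)./2 < t by have := ltn_ord v; lia.
have -> : v = fr_leaf (Ordinal lt_s) (odd v.-1) by apply: val_inj => /=; lia.
constructor.
Qed.

Lemma fr_adj_centre x : fr fr_centre x = (x != fr_centre).
Proof. by rewrite /friendship_adj /= andbT eq_sym. Qed.

Lemma fr_adj_leaf s b x :
  fr (fr_leaf s b) x = (x == fr_centre) || (x == fr_leaf s (~~ b)).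
Proof.
rewrite /friendship_adj -!val_eqE /=.
by case: b; case: (fr_vertexP x) => [|s' []] /=; lia.
Qed.

Lemma fr_nbr_colors_leaf k (f : {ffun V -> 'I_k}) s b :
  nbr_colors fr f (fr_leaf s b) = [set f fr_centre; f (fr_leaf s (~~ b))].
Proof.
rewrite /nbr_colors.
suff -> : [set x | fr (fr_leaf s b) x] = [set fr_centre; fr_leaf s (~~ b)].
  by rewrite imsetU1 imset_set1.
by apply/setP => x; rewrite !inE fr_adj_leaf.
Qed.

Hypothesis t_pos : 0 < t.

Lemma fr_walk2 u v : walk_len fr 2 u v.
Proof.
have leaf_adj s b : fr (fr_leaf s b) (fr_leaf s (~~ b)) by rewrite fr_adj_leaf eqxx orbT.
have leaf_centre s b : fr (fr_leaf s b) fr_centre by rewrite fr_adj_leaf eqxx.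
have centre_leaf s b : fr fr_centre (fr_leaf s b) by rewrite fr_adj_centre.
case: (fr_vertexP u) => [|s b]; case: (fr_vertexP v) => [|s' b'].
- exact: walk_len2 (centre_leaf (Ordinal t_pos) false) (leaf_centre _ _).
- by apply: walk_len2 (centre_leaf s' (~~ b')) _; rewrite -{2}(negbK b').
- exact: walk_len2 (leaf_adj s b) (leaf_centre _ _).
- exact: walk_len2 (leaf_centre s b) (centre_leaf _ _).
Qed.

Lemma fr_card_gt2 : 2 < #|V|.
Proof. by rewrite card_ord; lia. Qed.

Lemma fr_locating_lower k (f : {ffun V -> 'I_k}) :
  locating_coloring fr f -> t <= 'C(k.-1, 2).
Proof.
move=> floc; have fP : proper_coloring fr f by case/andP: floc.
pose c := f fr_centre.
have leaf_neq_centre s b : f (fr_leaf s b) != c.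
  by apply: proper_coloring_adj fP _; rewrite fr_adj_leaf eqxx.
have leaf_neq_mate s b : f (fr_leaf s b) != f (fr_leaf s (~~ b)).
  by apply: proper_coloring_adj fP _; rewrite fr_adj_leaf eqxx orbT.
pose A s : {set 'I_k} := [set f (fr_leaf s false); f (fr_leaf s true)].
have A_inj : injective A.
  move=> s s' /(set2_eq_cases (leaf_neq_mate s false)) A_eq.
  have [b' [eq_false eq_true]] : exists b', f (fr_leaf s false) = f (fr_leaf s' b') /\
                                            f (fr_leaf s true) = f (fr_leaf s' (~~ b')).
    by case: A_eq; [exists false | exists true].
  have /(congr1 val) /= : fr_leaf s false = fr_leaf s' b'.
    apply: (locating_coloring_inj fr_walk2 fr_card_gt2 floc eq_false).
    by rewrite !fr_nbr_colors_leaf /= eq_true.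
  by move=> eq_val; apply: val_inj; case: b' eq_val {eq_false eq_true} => /=; lia.
have A_draws s : A s \in [set B : {set 'I_k} | B \subset [set~ c] & #|B| == 2].
  rewrite inE cards2 leaf_neq_mate andbT.
  by apply/subsetP => x /set2P [] ->; rewrite !inE leaf_neq_centre.
have -> : k.-1 = #|[set~ c]| by rewrite cardsC1 card_ord.
have {1}-> : t = #|A @: [set: 'I_t]| by rewrite card_imset // cardsT card_ord.
rewrite -cards_draws; apply: subset_leq_card.
by apply/subsetP => _ /imsetP [s _ ->]; exact: A_draws.
Qed.

Definition fr_col (v : V) : nat :=
  if nat_of_ord v is w.+1 then
    let p := unrank_pair w./2 in (if odd w then p.2 else p.1).+1
  else 0.

Lemma fr_col_centre : fr_col fr_centre = 0. Proof. by []. Qed.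

Lemma fr_col_leaf s b :
  fr_col (fr_leaf s b) = (if b then (unrank_pair s).2 else (unrank_pair s).1).+1.
Proof.
rewrite /fr_col /=; have -> : (2 * s + b)./2 = s by case: b; lia.
by rewrite oddD oddM oddb.
Qed.

Lemma fr_col_leaf_pos s b : 0 < fr_col (fr_leaf s b).
Proof. by rewrite fr_col_leaf. Qed.

Lemma fr_col_mate s b : fr_col (fr_leaf s b) != fr_col (fr_leaf s (~~ b)).
Proof. by rewrite !fr_col_leaf; have := unrank_pair_lt s; case: b => /=; lia. Qed.

Lemma fr_col_leaf_inj s b s' b' :
  fr_col (fr_leaf s b) = fr_col (fr_leaf s' b') ->
  fr_col (fr_leaf s (~~ b)) = fr_col (fr_leaf s' (~~ b')) -> fr_leaf s b = fr_leaf s' b'.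
Proof.
rewrite !fr_col_leaf; have := unrank_pair_lt s; have := unrank_pair_lt s'.
have := @unrank_pair_inj s s'; case: (unrank_pair s) (unrank_pair s') => i j [i' j'] /=.
move=> inj lt' lt; case: b; case: b' => //= -[E1] [E2]; try lia.
all: by apply: val_inj; rewrite /= inj // E1 E2.
Qed.

Section UpperBound.
Variable m : nat.
Hypothesis t_le_bin : t <= 'C(m, 2).
Hypothesis bin_pred_lt : 'C(m.-1, 2) < t.

Lemma fr_col_le v : fr_col v <= m.
Proof.
case: (fr_vertexP v) => // s b; rewrite fr_col_leaf.
have lt_s : s < 'C(m, 2) by apply: leq_trans t_le_bin.
by have := unrank_pair_bound lt_s; have := unrank_pair_lt s; case: b; lia.
Qed.

Definition fr_coloring : {ffun V -> 'I_m.+1} := [ffun v => inord (fr_col v)].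

Lemma fr_coloring_eqE u v : (fr_coloring u == fr_coloring v) = (fr_col u == fr_col v).
Proof. by rewrite -val_eqE /= !ffunE !inordK // ltnS fr_col_le. Qed.

Lemma fr_coloring_proper : proper_coloring fr fr_coloring.
Proof.
apply/andP; split.
  apply/forallP => x; apply/forallP => y; apply/implyP; rewrite fr_coloring_eqE.
  case: (fr_vertexP x) => [|s b]; [rewrite fr_adj_centre | rewrite fr_adj_leaf].
    case: (fr_vertexP y) => [|s' b' _]; first by rewrite eqxx.
    by rewrite fr_col_centre eq_sym -lt0n fr_col_leaf_pos.
  case/orP => /eqP ->; last exact: fr_col_mate.
  by rewrite fr_col_centre -lt0n fr_col_leaf_pos.
apply/forallP => i; apply/existsP.
have hit x : fr_col x = i -> fr_coloring x == i.
  by move=> col_x; rewrite -val_eqE /= ffunE col_x inordK.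
case: i hit => -[|c] /= lt_c hit; first by exists fr_centre; apply: hit.
have [c0|c_pos] := posnP c.
  by exists (fr_leaf (Ordinal t_pos) false); apply: hit; rewrite c0.
have lt_s : 'C(c, 2) < t by apply: leq_ltn_trans bin_pred_lt; apply: leq_bin2l; lia.
exists (fr_leaf (Ordinal lt_s) true); apply: hit; rewrite fr_col_leaf /=.
by have := rank_pairK c_pos; rewrite /rank_pair /= addn0 => ->.
Qed.

Lemma fr_coloring_locating : locating_coloring fr fr_coloring.
Proof.
apply/andP; split; first exact: fr_coloring_proper.
apply/forallP => u; apply/forallP => v; apply/implyP.
case/(color_code_eqP fr_walk2 fr_card_gt2 _ _ fr_coloring_proper) => /eqP + nuv.
rewrite fr_coloring_eqE => /eqP fuv.
have centre_neq_leaf s b : fr_coloring fr_centre != fr_coloring (fr_leaf s b).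
  by rewrite fr_coloring_eqE fr_col_centre eq_sym -lt0n fr_col_leaf_pos.
case: (fr_vertexP u) fuv nuv => [|s b]; case: (fr_vertexP v) => [|s' b'] fuv nuv.
- by [].
- by have := fr_col_leaf_pos s' b'; rewrite -fuv.
- by have := fr_col_leaf_pos s b; rewrite fuv.
rewrite !fr_nbr_colors_leaf in nuv.
case: (set2_eq_cases (centre_neq_leaf s (~~ b)) nuv) => [[_ mates]|[centre_eq _]].
  by apply/eqP/fr_col_leaf_inj => //; apply/eqP; rewrite -fr_coloring_eqE mates.
by move: (centre_neq_leaf s' (~~ b')); rewrite centre_eq eqxx.
Qed.

End UpperBound.

End Friendship.

Theorem proposition2 (t : nat) (ht : 0 < t) (m : nat)
  (hm : t <= 'C(m, 2))
  (hmin : forall k : nat, t <= 'C(k, 2) -> m <= k) :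
  locating_chromatic_number (friendship_adj t) = 1 + m.
Proof.
have m_le : m <= t.+1 by apply: hmin; rewrite binS bin1; lia.
have bin_pred_lt : 'C(m.-1, 2) < t.
  rewrite ltnNge; apply/negP => /hmin.
  by case: m hm {hmin m_le} => [|m] /=; rewrite ?bin0n; lia.
rewrite add1n; apply: find_iota_least.
- by rewrite ltnS card_ord; lia.
- by apply/existsP; exists (fr_coloring t m); exact: fr_coloring_locating.
move=> [|k] /existsP [f /(fr_locating_lower ht)] /=; first by rewrite bin_small //; lia.
by move/hmin.
Qed.
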